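(* Assume $K_1\subseteq K_2\subseteq\cdots\subseteq K_n\subseteq\mathbb F_q$ are subfields. Let $\psi\in\mathrm{Aff}(\mathbb F_q^n)$ be given by $\boldsymbol\alpha\mapsto A\boldsymbol\alpha+\boldsymbol\beta$ with $A=(a_{ij})\in GL(n,\mathbb F_q)$ and $\boldsymbol\beta=(b_1,\dots,b_n)^T\in\mathbb F_q^n$. Then $\psi(\mathcal X)=\mathcal X$ (i.e.\ $\psi|_{\mathcal X}\in\mathrm{Aff}(\mathcal X)$) if and only if: (i) for all $i,j\in\{1,\dots,n\}$, $a_{ij}\in K_i$, $b_j\in K_j$, and $a_{ij}=0$ whenever $K_i\subsetneq K_j$; and (ii) for every maximal interval of indices $i\le j$ with $K_i=K_{i+1}=\cdots=K_j$ (i.e.\ $K_{i-1}\subsetneq K_i$ or $i=1$, and $K_j\subsetneq K_{j+1}$ or $j=n$), the square submatrix $(a_{uw})_{i\le u,w\le j}$ is invertible.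
   Context: $\mathcal X=K_1\times\cdots\times K_n\subseteq\mathbb F_q^n$. $\mathrm{Aff}(\mathbb F_q^n)$ is the group of maps $\boldsymbol\alpha\mapsto A\boldsymbol\alpha+\boldsymbol\beta$ with $A\in GL(n,\mathbb F_q)$, $\boldsymbol\beta\in\mathbb F_q^n$. $\mathrm{Aff}(\mathcal X)$ is the set of maps $\varphi:\mathcal X\to\mathcal X$ of the form $\varphi=\psi|_{\mathcal X}$ with $\psi\in\mathrm{Aff}(\mathbb F_q^n)$ and $\psi(\mathcal X)=\mathcal X$. *)

From HB Require Import structures.
From mathcomp Require Import all_boot all_order all_algebra.
Set Implicit Arguments. Unset Strict Implicit. Unset Printing Implicit Defensive.
Import GRing.Theory.
Local Open Scope ring_scope.

Definition is_subfield (F : finFieldType) (K : {set F}) : Prop :=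
  [/\ 0 \in K, 1 \in K,
      (forall x y, x \in K -> y \in K -> x - y \in K),
      (forall x y, x \in K -> y \in K -> x * y \in K) &
      (forall x, x \in K -> x^-1 \in K)].

Definition prodX (F : finFieldType) (n : nat) (K : 'I_n -> {set F})
  : {set 'cV[F]_n} :=
  [set x : 'cV[F]_n | [forall i : 'I_n, x i ord0 \in K i]].

Definition affimg (F : finFieldType) (n : nat) (A : 'M[F]_n) (b : 'cV[F]_n)
  (S : {set 'cV[F]_n}) : {set 'cV[F]_n} :=
  [set A *m x + b | x in S].

(* The index i + u as an element of 'I_n (default i if out of range). *)
Definition shift (n : nat) (i : 'I_n) (u : nat) : 'I_n := insubd i (i + u)%N.

Definition subblock (F : finFieldType) (n : nat) (A : 'M[F]_n) (i j : 'I_n)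
  : 'M[F]_((j - i).+1) :=
  \matrix_(u < (j - i).+1, w < (j - i).+1) A (shift i u) (shift i w).

From HB Require Import structures.
From mathcomp Require Import all_boot all_order all_algebra.
From mathcomp Require Import zify.
Set Implicit Arguments. Unset Strict Implicit. Unset Printing Implicit Defensive.
Import GRing.Theory.
Local Open Scope ring_scope.

(* Sufficiency: if a_uw and b_u lie in K_u and a_uw = 0 whenever K_u is
   strictly smaller than K_w, then along the chain every nonzero a_uw x_w is
   a product of elements of K_u, so psi maps X into X; psi is injective and
   X is finite, hence psi(X) = X.
   Necessity: psi(0) = b gives b_u in K_u; psi(y e_w) - b = y A e_w with
   y in K_w gives a_uw y in K_u, hence a_uw in K_u (take y = 1), and if
   a_uw != 0 then K_w is contained in a_uw^-1 K_u = K_u, so a_uw = 0 when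
   K_u is strictly contained in K_w.  For a maximal block [i, j] of the
   chain, this zero pattern makes A block lower triangular with respect to
   the partition [0, i) | [i, j] | (j, n), and the diagonal blocks of an
   invertible block lower triangular matrix are invertible. *)

Section Subfield.
Variables (F : finFieldType) (K : {set F}).
Hypothesis HK : is_subfield K.

Lemma subfield0 : 0 \in K. Proof. by case: HK. Qed.
Lemma subfield1 : 1 \in K. Proof. by case: HK. Qed.

Lemma subfieldM x y : x \in K -> y \in K -> x * y \in K.
Proof. by case: HK => _ _ _ HM _; apply: HM. Qed.

Lemma subfieldB x y : x \in K -> y \in K -> x - y \in K.
Proof. by case: HK => _ _ HB _ _; apply: HB. Qed.

Lemma subfieldD x y : x \in K -> y \in K -> x + y \in K.
Proof.
move=> hx hy.
by have := subfieldB hx (subfieldB subfield0 hy); rewrite sub0r opprK.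
Qed.

Lemma subfield_sum (I : finType) (P : pred I) (f : I -> F) :
  (forall k, P k -> f k \in K) -> \sum_(k | P k) f k \in K.
Proof.
move=> Hf; apply: (big_ind (fun x => x \in K)) => //.
- exact: subfield0.
- exact: subfieldD.
Qed.

Lemma subfield_cancel a y : a \in K -> a != 0 -> a * y \in K -> y \in K.
Proof.
case: HK => _ _ _ HM HV ha ha0 hay.
by have := HM _ _ (HV _ ha) hay; rewrite mulKf.
Qed.

End Subfield.

Lemma prodXP (F : finFieldType) (n : nat) (K : 'I_n -> {set F}) (x : 'cV[F]_n) :
  reflect (forall u, x u ord0 \in K u) (x \in prodX K).
Proof. by rewrite inE; apply: forallP. Qed.

Lemma imset_stable (T : finType) (f : T -> T) (S : {set T}) :
  injective f -> f @: S \subset S -> f @: S = S.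
Proof. by move=> finj sub; apply/eqP; rewrite eqEcard sub (card_imset _ finj) /=. Qed.

Section Necessity.
Variables (F : finFieldType) (n : nat) (K : 'I_n -> {set F}).
Hypothesis HK : forall i, is_subfield (K i).
Variables (A : 'M[F]_n) (b : 'cV[F]_n).
Hypothesis Hstab : affimg A b (prodX K) = prodX K.

Lemma stable_image x : x \in prodX K -> A *m x + b \in prodX K.
Proof. by move=> hx; rewrite -Hstab; apply/imsetP; exists x. Qed.

(* The image of 0 is b. *)
Lemma stable_translation u : b u ord0 \in K u.
Proof.
have h0 : (0 : 'cV[F]_n) \in prodX K by apply/prodXP => k; rewrite mxE subfield0.
by move/prodXP: (stable_image h0); rewrite mulmx0 add0r.
Qed.

(* The image of y e_w is y times the w-th column of A, plus b. *)
Lemma stable_scaled_entry u w y : y \in K w -> A u w * y \in K u.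
Proof.
move=> hy; have he : y *: delta_mx w ord0 \in prodX K.
  apply/prodXP => k; rewrite !mxE eqxx andbT.
  by case: eqP => [->|_]; rewrite ?mulr1 ?mulr0 ?subfield0.
move/prodXP/(_ u): (stable_image he).
rewrite -scalemxAr -colE !mxE mulrC => hs.
by have := subfieldB (HK u) hs (stable_translation u); rewrite addrK.
Qed.

Lemma stable_entry u w : A u w \in K u.
Proof. by have := stable_scaled_entry u (subfield1 (HK w)); rewrite mulr1. Qed.

(* If a_uw != 0 then K_w = a_uw^-1 (a_uw K_w) is contained in K_u. *)
Lemma stable_zero u w : K u \proper K w -> A u w = 0.
Proof.
move=> /properP[_ [y yKw yNKu]]; apply/eqP; apply: contraNT yNKu => a_nz.
apply: (subfield_cancel (HK u) (stable_entry u w) a_nz).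
exact: stable_scaled_entry.
Qed.

End Necessity.

Section Sufficiency.
Variables (F : finFieldType) (n : nat) (K : 'I_n -> {set F}).
Hypothesis HK : forall i, is_subfield (K i).
Hypothesis Hchain : forall i j : 'I_n, (i <= j)%N -> K i \subset K j.
Variables (A : 'M[F]_n) (b : 'cV[F]_n).
Hypothesis HA : A \in unitmx.
Hypothesis Hentry : forall u w : 'I_n, A u w \in K u.
Hypothesis Htrans : forall u : 'I_n, b u ord0 \in K u.
Hypothesis Hzero : forall u w : 'I_n, K u \proper K w -> A u w = 0.

Lemma chain_sub_or_proper (u w : 'I_n) : K u \proper K w \/ K w \subset K u.
Proof.
case: (leqP w u) => [/Hchain|/ltnW/Hchain sub]; first by right.
by case: (boolP (K w \subset K u)); [right | left; rewrite properE sub].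
Qed.

Lemma entry_scaled_mem (u w : 'I_n) y : y \in K w -> A u w * y \in K u.
Proof.
move=> hy; case: (chain_sub_or_proper u w) => [/Hzero->|/subsetP sub].
  by rewrite mul0r subfield0.
exact: subfieldM (Hentry u w) (sub y hy).
Qed.

Lemma affimg_sub : affimg A b (prodX K) \subset prodX K.
Proof.
apply/subsetP => _ /imsetP[x /prodXP hx ->]; apply/prodXP => u.
rewrite !mxE; apply: (subfieldD (HK u)) => //.
by apply: (subfield_sum (HK u) (P := predT)) => w _; apply: entry_scaled_mem.
Qed.

Lemma affimg_eq : affimg A b (prodX K) = prodX K.
Proof.
apply: imset_stable affimg_sub => x y /addIr e.
by rewrite -(mulKmx HA x) e mulKmx.
Qed.

End Sufficiency.

Section ChainBlocks.
Variables (T : finType) (n : nat) (K : 'I_n -> {set T}).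
Hypothesis Hchain : forall i j : 'I_n, (i <= j)%N -> K i \subset K j.

Lemma proper_across_start (i : 'I_n) :
  (forall k : 'I_n, k.+1 = i -> K k \proper K i) ->
  forall u w : 'I_n, (u < i)%N -> (i <= w)%N -> K u \proper K w.
Proof.
move=> Hprev u w ui iw; have k_lt : (i.-1 < n)%N by have := ltn_ord i; lia.
have Kk := Hprev (Ordinal k_lt) ltac:(rewrite /=; lia).
apply: proper_sub_trans (Hchain iw); apply: sub_proper_trans Kk.
by apply: Hchain => /=; lia.
Qed.

Lemma proper_across_end (j : 'I_n) :
  (forall k : 'I_n, k = j.+1 :> nat -> K j \proper K k) ->
  forall u w : 'I_n, (u <= j)%N -> (j < w)%N -> K u \proper K w.
Proof.
move=> Hnext u w uj jw; have k_lt : (j.+1 < n)%N by have := ltn_ord w; lia.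
have Kk := Hnext (Ordinal k_lt) erefl.
apply: sub_proper_trans (Hchain uj) _; apply: proper_sub_trans Kk _.
exact: Hchain.
Qed.

End ChainBlocks.

Section BlockIndices.
Variables (n : nat) (i j : 'I_n).
Hypothesis hij : (i <= j)%N.

Lemma shift_block (k : 'I_(j - i).+1) : val (shift i k) = (i + k)%N.
Proof.
rewrite /shift val_insubd.
by have := ltn_ord k; have := ltn_ord j; case: ifP; lia.
Qed.

Lemma shift_in_block (k : 'I_(j - i).+1) : (i <= shift i k <= j)%N.
Proof. by rewrite shift_block; have := ltn_ord k; lia. Qed.

Lemma inord_shift (k : 'I_(j - i).+1) : inord (shift i k - i) = k.
Proof. by apply/val_inj; rewrite shift_block /= inordK; have := ltn_ord k; lia. Qed.

Lemma shift_inord (w : 'I_n) :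
  (i <= w <= j)%N -> shift i (inord (w - i) : 'I_(j - i).+1) = w.
Proof. by move=> hw; apply/val_inj; rewrite shift_block /= inordK; lia. Qed.

Lemma sum_block (R : nmodType) (g : 'I_n -> R) :
  \sum_(k : 'I_n | (i <= k <= j)%N) g k = \sum_(k < (j - i).+1) g (shift i k).
Proof.
rewrite (reindex_onto (fun k : 'I_(j - i).+1 => shift i k)
                      (fun w : 'I_n => inord (w - i))) /=; last exact: shift_inord.
by apply: eq_bigl => k; rewrite shift_in_block inord_shift eqxx.
Qed.

End BlockIndices.

(* The set S of row vectors vanishing from index i on is
   mapped into itself by y |-> y A (Hleft), hence onto itself, as this map
   is injective.  If v kills the block, then the vector x carrying v in
   positions i .. j satisfies x A in S (Hright), so x A = y A for some y in
   S; thus x = y lies in S, which forces v = 0. *)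

Section BlockInvertibility.
Variables (F : finFieldType) (n : nat) (A : 'M[F]_n) (i j : 'I_n).
Hypothesis HA : A \in unitmx.
Hypothesis hij : (i <= j)%N.
Hypothesis Hleft : forall u w : 'I_n, (u < i)%N -> (i <= w)%N -> A u w = 0.
Hypothesis Hright : forall u w : 'I_n, (u <= j)%N -> (j < w)%N -> A u w = 0.

Definition embed_block (v : 'rV[F]_(j - i).+1) : 'rV[F]_n :=
  \row_u (if (i <= u <= j)%N then v 0 (inord (u - i)) else 0).

Definition tail_zero : {set 'rV[F]_n} :=
  [set y : 'rV[F]_n | [forall u : 'I_n, (i <= u)%N ==> (y 0 u == 0)]].

Lemma embed_block_shift v (k : 'I_(j - i).+1) : embed_block v 0 (shift i k) = v 0 k.
Proof. by rewrite mxE shift_in_block // inord_shift. Qed.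

Lemma embed_block_mulmx v (w : 'I_n) :
  (embed_block v *m A) 0 w = \sum_(k < (j - i).+1) v 0 k * A (shift i k) w.
Proof.
rewrite mxE (bigID (fun k : 'I_n => (i <= k <= j)%N)) /= addrC big1 ?add0r.
  by rewrite sum_block //; apply: eq_bigr => k _; rewrite embed_block_shift.
by move=> k /negbTE out; rewrite mxE out mul0r.
Qed.

Lemma embed_block_mulmx_tail v :
  v *m subblock A i j = 0 -> embed_block v *m A \in tail_zero.
Proof.
move=> Hv; rewrite inE; apply/forallP => w; apply/implyP => iw.
rewrite embed_block_mulmx; case: (leqP w j) => [wj | jw].
  have /rowP/(_ (inord (w - i))) := Hv; rewrite !mxE => block_w.
  rewrite -[X in _ == X]block_w; apply/eqP; apply: eq_bigr => k _.
  by rewrite !mxE shift_inord ?iw.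
apply/eqP; apply: big1 => k _; rewrite Hright ?mulr0 //.
by have /andP[] := shift_in_block hij k.
Qed.

Lemma tail_zero_mulmx : [set y *m A | y in tail_zero] = tail_zero.
Proof.
apply: imset_stable => [y1 y2 /= e | ]; first by rewrite -(mulmxK HA y1) e mulmxK.
apply/subsetP => _ /imsetP[y /[!inE] /forallP ytail ->].
apply/forallP => w; apply/implyP => iw; rewrite mxE; apply/eqP; apply: big1 => k _.
case: (leqP i k) => [ik | ki]; last by rewrite Hleft ?mulr0.
by move/implyP/(_ ik)/eqP: (ytail k) ->; rewrite mul0r.
Qed.

Lemma subblock_unit : subblock A i j \in unitmx.
Proof.
rewrite -row_free_unit; apply: inj_row_free => v Hv.
move: (embed_block_mulmx_tail Hv); rewrite -tail_zero_mulmx.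
case/imsetP=> y ytail /(can_inj (mulmxK HA)) embed_y.
apply/rowP => k; rewrite mxE -embed_block_shift embed_y.
move: ytail; rewrite inE => /forallP/(_ (shift i k))/implyP tail_k.
by apply/eqP/tail_k; have /andP[] := shift_in_block hij k.
Qed.

End BlockInvertibility.

Theorem mainTheorem7 (F : finFieldType) (n : nat) (K : 'I_n -> {set F})
  (HK : forall i, is_subfield (K i))
  (Hchain : forall i j : 'I_n, (i <= j)%N -> K i \subset K j)
  (A : 'M[F]_n) (b : 'cV[F]_n) (HA : A \in unitmx) :
  affimg A b (prodX K) = prodX K <->
  ((forall i j : 'I_n,
      [/\ A i j \in K i, b j ord0 \in K j & (K i \proper K j -> A i j = 0)])
   /\
   (forall i j : 'I_n, (i <= j)%N ->
      (forall k : 'I_n, (i <= k <= j)%N -> K k = K i) ->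
      (forall k : 'I_n, k.+1 = i -> K k \proper K i) ->
      (forall k : 'I_n, k = j.+1 :> nat -> K j \proper K k) ->
      subblock A i j \in unitmx)).
Proof.
split=> [Hstab | [Hcond _]]; last first.
  apply: (affimg_eq HK Hchain HA) => [u w | u | u w].
  - by case: (Hcond u w).
  - by case: (Hcond u u).
  - by case: (Hcond u w) => _ _; apply.
(* The zero pattern alone gives (ii); the constancy of K on [i, j] is unused. *)
have Hzero := stable_zero HK Hstab.
split=> [u w | i j hij _ Hprev Hnext].
  split; [exact: stable_entry Hstab u w | exact: stable_translation Hstab w | ].
  exact: Hzero.
apply: subblock_unit HA hij _ _ => u w hu hw; apply: Hzero.
- exact: (proper_across_start Hchain Hprev hu hw).
- exact: (proper_across_end Hchain Hnext hu hw).
Qed.
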